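(* Let $n$ be a positive integer and $\lambda$ an infinite cardinal. For any shift-continuous $T_1$-topology $\tau$ on the semilattice $\exp_n\lambda$ the following conditions are equivalent: (i) $(\exp_n\lambda,\tau)$ is countably pracompact; (ii) $(\exp_n\lambda,\tau)$ is feebly compact; (iii) $(\exp_n\lambda,\tau)$ is $d$-feebly compact; (iv) the space $(\exp_n\lambda,\tau)$ is $H$-closed.
   Context: For a positive integer $n$ and a cardinal $\lambda$, $\exp_n\lambda=\{A\subseteq\lambda\colon |A|\leqslant n\}$, regarded as a semilattice under $\cap$. A topology on a semilattice is shift-continuous if the semilattice operation is separately continuous. A space $X$ is countably compact at a subset $A$ if every infinite subset of $A$ has an accumulation point in $X$; $X$ is countably pracompact if there is a dense subset $A\subseteq X$ such that $X$ is countably compact at $A$. $X$ is feebly compact if every locally finite open cover of $X$ is finite; $X$ is $d$-feebly compact if every discrete family of open subsets of $X$ is finite. A Hausdorff space is $H$-closed if it is closed in every Hausdorff space containing it as a subspace. *)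

From Stdlib Require Import List Arith.
Import ListNotations.

Set Implicit Arguments.

Definition set (X : Type) := X -> Prop.

Definition finite_set {X : Type} (A : set X) : Prop :=
  exists l : list X, forall x, A x -> In x l.

(* A type is infinite (models an infinite cardinal lambda). *)
Definition infinite_type (X : Type) : Prop :=
  ~ exists l : list X, forall x : X, In x l.

Definition exp_set (n : nat) (L : Type) (A : set L) : Prop :=
  exists l : list L, length l <= n /\ forall x, A x -> In x l.

Definition expn (n : nat) (L : Type) : Type := { A : set L | exp_set n A }.

Lemma exp_set_inter (n : nat) (L : Type) (A B : set L) :
  exp_set n A -> exp_set n (fun x => A x /\ B x).
Proof.
  intros [l [Hl HA]]. exists l. split; [exact Hl|]. intros x [Hx _]. exact (HA x Hx).
Qed.

Definition exp_meet (n : nat) (L : Type) (a b : expn n L) : expn n L :=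
  exist _ (fun x => proj1_sig a x /\ proj1_sig b x)
        (exp_set_inter (proj1_sig b) (proj2_sig a)).

Record topology (X : Type) := Topology {
  is_open : set X -> Prop;
  open_full : is_open (fun _ => True);
  open_inter : forall U V, is_open U -> is_open V -> is_open (fun x => U x /\ V x);
  open_union : forall F : set (set X), (forall U, F U -> is_open U) ->
                 is_open (fun x => exists U, F U /\ U x)
}.

Section Top.
Context {X : Type} (t : topology X).

Definition is_closed (A : set X) : Prop := is_open t (fun x => ~ A x).

Definition T1 : Prop :=
  forall x y : X, x <> y -> exists U, is_open t U /\ U x /\ ~ U y.

Definition Hausdorff : Prop :=
  forall x y : X, x <> y -> exists U V, is_open t U /\ is_open t V /\ U x /\ V y /\
    forall z, ~ (U z /\ V z).

Definition dense (D : set X) : Prop :=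
  forall U, is_open t U -> (exists x, U x) -> exists x, U x /\ D x.

Definition accumulation_point (x : X) (B : set X) : Prop :=
  forall U, is_open t U -> U x -> exists y, U y /\ B y /\ y <> x.

Definition countably_compact_at (A : set X) : Prop :=
  forall B : set X, (forall y, B y -> A y) -> ~ finite_set B ->
    exists x, accumulation_point x B.

Definition countably_pracompact : Prop :=
  exists A : set X, dense A /\ countably_compact_at A.

Definition finite_family (F : set (set X)) : Prop :=
  exists l : list (set X), forall U, F U -> In U l.

Definition open_family (F : set (set X)) : Prop := forall U, F U -> is_open t U.

Definition is_cover (F : set (set X)) : Prop := forall x, exists U, F U /\ U x.

Definition locally_finite (F : set (set X)) : Prop :=
  forall x, exists W, is_open t W /\ W x /\
    finite_family (fun U => F U /\ exists y, U y /\ W y).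

Definition discrete_family (F : set (set X)) : Prop :=
  forall x, exists W, is_open t W /\ W x /\
    forall U V, F U -> F V -> (exists y, U y /\ W y) -> (exists y, V y /\ W y) -> U = V.

Definition feebly_compact : Prop :=
  forall F, open_family F -> is_cover F -> locally_finite F -> finite_family F.

Definition d_feebly_compact : Prop :=
  forall F, open_family F -> discrete_family F -> finite_family F.

End Top.

Definition embedding {X Y : Type} (tX : topology X) (tY : topology Y) (e : X -> Y) : Prop :=
  (forall x1 x2, e x1 = e x2 -> x1 = x2) /\
  (forall V, is_open tY V -> is_open tX (fun x => V (e x))) /\
  (forall U, is_open tX U -> exists V, is_open tY V /\ forall x, U x <-> V (e x)).

Definition H_closed {X : Type} (t : topology X) : Prop :=
  Hausdorff t /\
  forall (Y : Type) (tY : topology Y) (e : X -> Y),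
    Hausdorff tY -> embedding t tY e -> is_closed tY (fun y => exists x, e x = y).

(* shift-continuity: translations x |-> a /\ x are continuous
   (the semilattice is commutative, so one side suffices) *)
Definition shift_continuous {n : nat} {L : Type} (t : topology (expn n L)) : Prop :=
  forall a : expn n L, forall V, is_open t V -> is_open t (fun x => V (exp_meet a x)).

(* Shift-continuity and T1 make every upper cone [↑x = {y | x ⊆ y}] clopen, so
   the topology is Hausdorff, and since strict chains in [exp_n λ] have length
   at most [n + 1], every nonempty open set contains an isolated point.  In a T1
   space whose isolated points are dense, countable pracompactness, feeble
   compactness and d-feeble compactness are each equivalent to countable
   compactness at the set of isolated points: an infinite closed discrete set
   of isolated points yields an infinite locally finite open cover, an infinite
   discrete open family, and a Hausdorff one-point extension in which the space
   is not closed.  Conversely, H-closedness follows once every open filter base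
   has an adherent point; for a base take [x] maximal such that every member
   has points above [x].  Were [x] not adherent, some member would contain an
   infinite Δ-system of isolated points with kernel [x], and such a Δ-system
   can only accumulate at [x]. *)

From Stdlib Require Import List Lia Classical ClassicalEpsilon
  FunctionalExtensionality PropExtensionality ProofIrrelevance.
Import ListNotations.

Lemma set_ext {X : Type} (U V : set X) : (forall x, U x <-> V x) -> U = V.
Proof.
  intros H. apply functional_extensionality; intro x.
  apply propositional_extensionality, H.
Qed.

Lemma open_ext {X : Type} (t : topology X) (U V : set X) :
  is_open t U -> (forall x, U x <-> V x) -> is_open t V.
Proof. intros HU H. rewrite <- (set_ext _ _ H). exact HU. Qed.

Lemma finite_set_of_singletons {X : Type} (B : set X) (ls : list (set X)) :
  (forall b, B b -> In (fun y => y = b) ls) -> finite_set B.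
Proof.
  intros HB.
  assert (Hpts : forall ls' : list (set X), exists l : list X, forall b, In (fun y => y = b) ls' -> In b l).
  { intros ls'. induction ls' as [|S ls' [l Hl]]; [exists []; intros b []|].
    destruct (classic (exists a, S = (fun y => y = a))) as [[a ->]|HS].
    - exists (a :: l). intros b [E|Hb]; [left|right; auto].
      pose proof (equal_f E b) as Eb. cbv beta in Eb. symmetry. rewrite Eb. reflexivity.
    - exists l. intros b [E|Hb]; [exfalso; apply HS; exists b; auto|auto]. }
  destruct (Hpts ls) as [l Hl]. exists l. intros b Hb. apply Hl, HB, Hb.
Qed.

Fixpoint iter_list {Y : Type} (f : list Y -> Y) (k : nat) : list Y :=
  match k with 0 => [] | S k => f (iter_list f k) :: iter_list f k end.

(* An infinite set is obtained as the union of the lists [f^k []], where [f l]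
   is a new point related to every point of [l]. *)
Lemma exists_infinite_pairwise {Y : Type} (Q : Y -> Prop) (R : Y -> Y -> Prop) :
  (forall y1 y2, R y1 y2 -> R y2 y1) ->
  (forall l : list Y, exists y, Q y /\ forall y', In y' l -> y <> y' /\ R y y') ->
  exists B : set Y, ~ finite_set B /\ (forall y, B y -> Q y) /\
    (forall y1 y2, B y1 -> B y2 -> y1 <> y2 -> R y1 y2).
Proof.
  intros Rsym H.
  set (f := fun l => proj1_sig (constructive_indefinite_description _ (H l))).
  assert (Hf : forall l, Q (f l) /\ forall y', In y' l -> f l <> y' /\ R (f l) y').
  { intros l. exact (proj2_sig (constructive_indefinite_description _ (H l))). }
  exists (fun y => exists k, In y (iter_list f k)).
  assert (Hlen : forall k, length (iter_list f k) = k) by (induction k; simpl; auto).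
  assert (Hnd : forall k, NoDup (iter_list f k)).
  { induction k; simpl; constructor; auto.
    intros Hin. apply (proj1 (proj2 (Hf _) _ Hin)). reflexivity. }
  assert (Hmono : forall k m, k <= m -> incl (iter_list f k) (iter_list f m)).
  { intros k m Hkm. induction Hkm; [apply incl_refl|]. simpl. apply incl_tl, IHHkm. }
  assert (Hpair : forall k y1 y2, In y1 (iter_list f k) -> In y2 (iter_list f k) ->
            y1 <> y2 -> R y1 y2).
  { induction k; simpl; intros y1 y2 H1 H2 Hne; [contradiction|].
    destruct H1 as [<-|H1], H2 as [<-|H2].
    - congruence.
    - apply (proj2 (Hf _) y2 H2).
    - apply Rsym, (proj2 (Hf _) y1 H1).
    - auto. }
  split; [|split].
  - intros [l Hl].
    assert (Hi : incl (iter_list f (S (length l))) l) by (intros y Hy; apply Hl; eauto).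
    pose proof (NoDup_incl_length (Hnd _) Hi) as Hc. rewrite Hlen in Hc. lia.
  - intros y [k Hk]. induction k; simpl in Hk; [contradiction|].
    destruct Hk as [<-|Hk]; [apply Hf|auto].
  - intros y1 y2 [k1 H1] [k2 H2]. apply (Hpair (Nat.max k1 k2)).
    + apply (Hmono k1); [lia|auto].
    + apply (Hmono k2); [lia|auto].
Qed.
Section IsolatedPoints.
Context {X : Type} (t : topology X).

Definition isolated (x : X) : Prop := is_open t (fun y => y = x).

Definition closed_discrete (B : set X) : Prop :=
  forall x, exists U, is_open t U /\ U x /\ forall y, U y -> B y -> y = x.

Lemma open_of_isolated (S : set X) : (forall y, S y -> isolated y) -> is_open t S.
Proof.
  intros HS.
  apply open_ext with (fun y => exists U, (fun U => exists b, S b /\ U = (fun w => w = b)) U /\ U y).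
  - apply open_union. intros U [b [Hb ->]]. apply HS, Hb.
  - intros y; split.
    + intros [U [[b [Hb ->]] ->]]. exact Hb.
    + intros Hy. exists (fun w => w = y). split; [exists y; auto|reflexivity].
Qed.

Lemma closed_discrete_open_complement (B : set X) :
  closed_discrete B -> is_open t (fun y => ~ B y).
Proof.
  intros HB.
  apply open_ext with (fun y => exists U, (fun U => is_open t U /\ forall w, U w -> ~ B w) U /\ U y).
  - apply open_union. intros U [HU _]. exact HU.
  - intros y; split.
    + intros [U [[_ HUB] HUy]]. apply HUB, HUy.
    + intros Hy. destruct (HB y) as [U [HU [HUy HUB]]]. exists U. repeat split; auto.
      intros w Hw HBw. apply Hy. rewrite <- (HUB w Hw HBw). exact HBw.
Qed.

Lemma not_compact_at_closed_discrete (A : set X) :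
  ~ countably_compact_at t A ->
  exists B, (forall y, B y -> A y) /\ ~ finite_set B /\ closed_discrete B.
Proof.
  intros HnC. apply NNPP. intros Hno. apply HnC. intros B HBA Hinf. apply NNPP. intros Hnacc.
  apply Hno. exists B. repeat split; auto.
  intros x. apply NNPP. intros Hx. apply Hnacc. exists x. intros U HU HUx. apply NNPP. intros Hy.
  apply Hx. exists U. repeat split; auto. intros y HUy HBy. apply NNPP. intros Hne.
  apply Hy. exists y. auto.
Qed.

Lemma feebly_compact_compact_at_isolated :
  feebly_compact t -> countably_compact_at t isolated.
Proof.
  intros HF. apply NNPP. intros HnC.
  destruct (not_compact_at_closed_discrete isolated HnC) as [B [HBi [Hinf HB]]].
  set (F := fun U : set X => (exists b, B b /\ U = (fun y => y = b)) \/ U = (fun y => ~ B y)).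
  destruct (HF F) as [ls Hls].
  - intros U [[b [Hb ->]] | ->]; [apply HBi, Hb|apply closed_discrete_open_complement, HB].
  - intros x. destruct (classic (B x)).
    + exists (fun y => y = x). split; [left; exists x; auto|reflexivity].
    + exists (fun y => ~ B y). split; [right; reflexivity|auto].
  - intros x. destruct (HB x) as [W [HW [HWx HWB]]]. exists W. repeat split; auto.
    exists [(fun y => ~ B y); (fun y => y = x)]. intros U [[[b [Hb ->]] | ->] [y [Hy HWy]]].
    + cbv beta in Hy. subst y. rewrite (HWB b HWy Hb). simpl; auto.
    + simpl; auto.
  - apply Hinf, (finite_set_of_singletons B ls). intros b Hb. apply Hls. left. exists b. auto.
Qed.

Lemma d_feebly_compact_compact_at_isolated :
  d_feebly_compact t -> countably_compact_at t isolated.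
Proof.
  intros HF. apply NNPP. intros HnC.
  destruct (not_compact_at_closed_discrete isolated HnC) as [B [HBi [Hinf HB]]].
  set (F := fun U : set X => exists b, B b /\ U = (fun y => y = b)).
  destruct (HF F) as [ls Hls].
  - intros U [b [Hb ->]]. apply HBi, Hb.
  - intros x. destruct (HB x) as [W [HW [HWx HWB]]]. exists W. repeat split; auto.
    intros U V [b1 [Hb1 ->]] [b2 [Hb2 ->]] [y1 [H1 HW1]] [y2 [H2 HW2]].
    cbv beta in H1, H2. subst y1 y2.
    rewrite (HWB b1 HW1 Hb1), (HWB b2 HW2 Hb2). reflexivity.
  - apply Hinf, (finite_set_of_singletons B ls). intros b Hb. apply Hls. exists b. auto.
Qed.

(* The added point [None] has as neighbourhoods the sets containing all but
   finitely many points of [B]. *)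
Definition one_point_extension (B : set X) : topology (option X).
Proof.
  refine (@Topology (option X)
    (fun V => is_open t (fun x => V (Some x)) /\
       (V None -> exists l, forall b, B b -> ~ In b l -> V (Some b))) _ _ _).
  - split; [apply open_full|intros _; exists []; auto].
  - intros U V [HU HUn] [HV HVn]. split; [apply open_inter; auto|].
    intros [HUN HVN]. destruct (HUn HUN) as [l1 H1], (HVn HVN) as [l2 H2].
    exists (l1 ++ l2). intros b Hb Hnin.
    split; [apply H1|apply H2]; auto; intro; apply Hnin, in_or_app; auto.
  - intros F HF. split.
    + apply open_ext with
        (fun x => exists W, (fun W => exists U, F U /\ W = (fun x => U (Some x))) W /\ W x).
      * apply open_union. intros W [U [HU ->]]. apply (HF U HU).
      * intros x; split.
        -- intros [W [[U [HU ->]] HW]]. exists U; auto.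
        -- intros [U [HU HUx]]. exists (fun x => U (Some x)). split; [exists U; auto|auto].
    + intros [U [HU HUn]]. destruct (proj2 (HF U HU) HUn) as [l Hl]. exists l.
      intros b Hb Hnin. exists U; auto.
Defined.

Definition lift_set (W : set X) : set (option X) :=
  fun o => match o with Some w => W w | None => False end.

Lemma lift_set_open (B W : set X) : is_open t W -> is_open (one_point_extension B) (lift_set W).
Proof. intros HW. split; [exact HW|intros []]. Qed.

Lemma one_point_extension_Hausdorff (B : set X) :
  Hausdorff t -> (forall y, B y -> isolated y) -> closed_discrete B ->
  Hausdorff (one_point_extension B).
Proof.
  intros Hhaus HBi HB.
  assert (Hsep : forall x, exists U V, is_open (one_point_extension B) U /\
            is_open (one_point_extension B) V /\ U (Some x) /\ V None /\
            forall z, ~ (U z /\ V z)).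
  { intros x. destruct (HB x) as [W [HW [HWx HWB]]].
    exists (lift_set W),
           (fun o => match o with Some w => B w /\ w <> x | None => True end).
    split; [apply lift_set_open, HW|]. split; [split|].
    - apply open_of_isolated. intros y [Hy _]. apply HBi, Hy.
    - intros _. exists [x]. intros b Hb Hnin. split; auto. intros ->. apply Hnin. left; auto.
    - repeat split; auto. intros [w|] [H1 H2]; [|contradiction].
      destruct H2 as [HBw Hne]. apply Hne, HWB; auto. }
  intros [x|] [y|] Hne.
  - assert (Hxy : x <> y) by congruence.
    destruct (Hhaus x y Hxy) as [U [V [HU [HV [HUx [HVy Hd]]]]]].
    exists (lift_set U), (lift_set V).
    repeat split; try apply lift_set_open; auto. intros [w|]; [apply Hd|tauto].
  - apply Hsep.
  - destruct (Hsep y) as [U [V [HU [HV [HUy [HVn Hd]]]]]].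
    exists V, U. refine (conj HV (conj HU (conj HVn (conj HUy _)))).
    intros z [H1 H2]. apply (Hd z). auto.
  - congruence.
Qed.

Lemma Some_embedding (B : set X) : embedding t (one_point_extension B) Some.
Proof.
  split; [intros x1 x2 E; injection E; auto|]. split; [intros V [HV _]; exact HV|].
  intros U HU. exists (lift_set U). split; [apply lift_set_open, HU|intros x; simpl; tauto].
Qed.

Lemma H_closed_compact_at_isolated : H_closed t -> countably_compact_at t isolated.
Proof.
  intros [Hhaus HH]. apply NNPP. intros HnC.
  destruct (not_compact_at_closed_discrete isolated HnC) as [B [HBi [Hinf HB]]].
  destruct (HH _ _ _ (one_point_extension_Hausdorff B Hhaus HBi HB) (Some_embedding B))
    as [_ Hcofinite].
  destruct Hcofinite as [l Hl]; [intros [x Hx]; discriminate|].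
  apply Hinf. exists l. intros b Hb. apply NNPP. intros Hnin.
  apply (Hl b Hb Hnin). exists b. reflexivity.
Qed.

Definition open_filter_base (TT : set (set X)) : Prop :=
  (exists T, TT T) /\
  (forall T, TT T -> is_open t T /\ exists x, T x) /\
  (forall T T', TT T -> TT T' -> exists T'', TT T'' /\ forall x, T'' x -> T x /\ T' x).

Definition adherent_point (p : X) (TT : set (set X)) : Prop :=
  forall O, is_open t O -> O p -> forall T, TT T -> exists x, O x /\ T x.

Lemma H_closed_of_adherent :
  Hausdorff t -> (forall TT, open_filter_base TT -> exists p, adherent_point p TT) ->
  H_closed t.
Proof.
  intros Hhaus Hadh. split; [exact Hhaus|].
  intros Y tY e HY [_ [Hcont _]]. unfold is_closed.
  apply open_ext with (fun y => exists V, (fun V => is_open tY V /\ forall x, ~ V (e x)) V /\ V y).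
  { apply open_union. intros V [HV _]. exact HV. }
  intros y; split.
  { intros [V [[_ HVe] HVy]] [x <-]. apply (HVe x HVy). }
  intros Hy. apply NNPP. intros Hno.
  set (TT := fun T => exists V, is_open tY V /\ V y /\ forall x, T x <-> V (e x)).
  assert (Hbase : open_filter_base TT).
  { split; [|split].
    - exists (fun _ => True), (fun _ => True). split; [apply open_full|tauto].
    - intros T [V [HV [HVy HTV]]]. split.
      + apply open_ext with (fun x => V (e x)); [apply Hcont, HV|]. intros x. symmetry. apply HTV.
      + apply NNPP. intros Hempty. apply Hno. exists V. repeat split; auto.
        intros x HVx. apply Hempty. exists x. apply HTV, HVx.
    - intros T T' [V [HV [HVy HTV]]] [V' [HV' [HV'y HTV']]].
      exists (fun x => T x /\ T' x). split; [|auto].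
      exists (fun w => V w /\ V' w). split; [apply open_inter; auto|]. split; [auto|].
      intros x. rewrite HTV, HTV'. tauto. }
  destruct (Hadh TT Hbase) as [p Hp].
  assert (Hpy : e p <> y) by (intros E; apply Hy; exists p; exact E).
  destruct (HY (e p) y Hpy) as [P [Q [HP [HQ [HPp [HQy HPQ]]]]]].
  destruct (Hp (fun x => P (e x)) (Hcont P HP) HPp (fun x => Q (e x))) as [z [Hz1 Hz2]].
  - exists Q. repeat split; auto.
  - apply (HPQ (e z)). auto.
Qed.

Section T1Space.
Hypothesis hT1 : T1 t.

Lemma T1_open_neq (x : X) : is_open t (fun y => y <> x).
Proof.
  apply open_ext with (fun y => exists U, (fun U => is_open t U /\ ~ U x) U /\ U y).
  - apply open_union. intros U [HU _]. exact HU.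
  - intros y; split.
    + intros [U [[_ HUx] HUy]] ->. contradiction.
    + intros Hne. destruct (hT1 y x Hne) as [U [HU [HUy HUx]]]. exists U. auto.
Qed.

Lemma accumulation_point_nbhd_infinite (p : X) (B W : set X) :
  accumulation_point t p B -> is_open t W -> W p -> ~ finite_set (fun y => B y /\ W y).
Proof.
  intros Hacc HW HWp [l Hl].
  assert (Hsep : forall l' : list X, exists V, is_open t V /\ V p /\
            forall y, In y l' -> y <> p -> ~ V y).
  { induction l' as [|s l' [V [HV [HVp HVs]]]].
    - exists (fun _ => True). repeat split; [apply open_full|intros y []].
    - destruct (classic (s = p)) as [->|Hs].
      + exists V. repeat split; auto. intros y [<-|Hy] Hne; [congruence|auto].
      + destruct (hT1 p s (not_eq_sym Hs)) as [U [HU [HUp HUs]]].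
        exists (fun y => V y /\ U y). repeat split; [apply open_inter; auto|auto|auto|].
        intros y [<-|Hy] Hne [H1 H2]; [contradiction|]. apply (HVs y Hy Hne H1). }
  destruct (Hsep l) as [V [HV [HVp HVl]]].
  destruct (Hacc (fun y => W y /\ V y)) as [y [[HWy HVy] [HBy Hne]]];
    [apply open_inter; auto|auto|].
  apply (HVl y (Hl y (conj HBy HWy)) Hne HVy).
Qed.

Lemma accumulation_point_nbhd_two (p : X) (B W : set X) :
  accumulation_point t p B -> is_open t W -> W p ->
  exists y1 y2, B y1 /\ B y2 /\ W y1 /\ W y2 /\ y1 <> y2.
Proof.
  intros Hacc HW HWp.
  destruct (Hacc W HW HWp) as [y1 [HW1 [HB1 _]]].
  apply NNPP. intros Hno. apply (accumulation_point_nbhd_infinite p B W Hacc HW HWp).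
  exists [y1]. intros y [HBy HWy]. left. apply NNPP. intros Hne.
  apply Hno. exists y1, y. auto.
Qed.

Section DenseIsolated.
Hypothesis isolated_dense : dense t isolated.

Lemma countably_pracompact_iff :
  countably_pracompact t <-> countably_compact_at t isolated.
Proof.
  split.
  - intros [D [HD HDcc]] B HB Hinf. apply (HDcc B); auto. intros y Hy.
    destruct (HD (fun w => w = y) (HB y Hy)) as [z [-> Hz]]; [exists y; auto|exact Hz].
  - intros HC. exists isolated. auto.
Qed.

Lemma locally_finite_meeting_finite (F : set (set X)) (l : list X) :
  locally_finite t F -> finite_family (fun U => F U /\ exists y, In y l /\ U y).
Proof.
  intros HLF. induction l as [|a l [ls Hls]]; [exists []; intros U [_ [y [[] _]]]|].
  destruct (HLF a) as [W [_ [HWa [la Hla]]]]. exists (la ++ ls).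
  intros U [HU [y [[<-|Hy] HUy]]]; apply in_or_app.
  - left. apply Hla. split; [exact HU|exists a; auto].
  - right. apply Hls. split; [exact HU|exists y; auto].
Qed.

(* Pick an isolated point in every member of [F]; if these points form an
   infinite set, local finiteness fails at one of their accumulation points. *)
Lemma locally_finite_open_finite (F : set (set X)) :
  countably_compact_at t isolated -> open_family t F -> locally_finite t F -> finite_family F.
Proof.
  intros HC HFo HLF.
  destruct (classic (inhabited X)) as [Hinh|Hempty].
  2: { exists [fun _ => False]. intros U _. left. apply set_ext.
       intros x. exfalso. apply Hempty. constructor. exact x. }
  set (ch := fun U : set X => epsilon Hinh (fun z => U z /\ isolated z)).
  assert (Hch : forall U, F U -> (exists z, U z) -> U (ch U) /\ isolated (ch U)).
  { intros U HU [z Hz]. apply (epsilon_spec Hinh (fun z => U z /\ isolated z)).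
    apply isolated_dense; [apply HFo, HU|exists z; exact Hz]. }
  set (B := fun y => exists U, F U /\ (exists z, U z) /\ y = ch U).
  destruct (classic (finite_set B)) as [[l Hl]|Hinf].
  - destruct (locally_finite_meeting_finite F l HLF) as [ls Hls].
    exists ((fun _ => False) :: ls). intros U HU.
    destruct (classic (exists z, U z)) as [Hne|Hno].
    + right. apply Hls. split; [exact HU|]. exists (ch U). split.
      * apply Hl. exists U. auto.
      * apply Hch; auto.
    + left. apply set_ext. intros x. split; [intros []|intros Hx; apply Hno; exists x; exact Hx].
  - exfalso. destruct (HC B) as [p Hp]; [intros y [U [HU [Hne ->]]]; apply Hch; auto|exact Hinf|].
    destruct (HLF p) as [W [HW [HWp [lw Hlw]]]].
    apply (accumulation_point_nbhd_infinite p B W Hp HW HWp). exists (map ch lw).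
    intros y [[U [HU [Hne ->]]] HWy]. apply in_map, Hlw. split; [exact HU|].
    exists (ch U). split; [apply Hch; auto|exact HWy].
Qed.

Lemma compact_at_isolated_feebly_compact :
  countably_compact_at t isolated -> feebly_compact t.
Proof. intros HC F HFo _ HLF. apply locally_finite_open_finite; auto. Qed.

Lemma compact_at_isolated_d_feebly_compact :
  countably_compact_at t isolated -> d_feebly_compact t.
Proof.
  intros HC F HFo Hdisc. apply locally_finite_open_finite; auto.
  intros x. destruct (Hdisc x) as [W [HW [HWx Huniq]]]. exists W. repeat split; auto.
  destruct (classic (exists U, F U /\ exists y, U y /\ W y)) as [[U0 [HU0 HU0W]]|Hn].
  - exists [U0]. intros U [HU HUW]. left. apply (Huniq U0 U HU0 HU HU0W HUW).
  - exists []. intros U [HU HUW]. apply Hn. exists U. auto.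
Qed.

End DenseIsolated.
End T1Space.
End IsolatedPoints.

Lemma exp_set_mono {n : nat} {L : Type} {A B : set L} :
  exp_set n B -> (forall z, A z -> B z) -> exp_set n A.
Proof. intros [l [Hl HB]] HAB. exists l. split; [exact Hl|]. intros z Hz. apply HB, HAB, Hz. Qed.

Section ExpSemilattice.
Context {n : nat} {L : Type}.

Definition subset (x y : expn n L) : Prop := forall z, proj1_sig x z -> proj1_sig y z.

Definition up (x : expn n L) : set (expn n L) := fun y => subset x y.

Definition meet_below (x d d' : expn n L) : Prop :=
  forall z, proj1_sig d z -> proj1_sig d' z -> proj1_sig x z.

Definition delta_system (B : set (expn n L)) (x : expn n L) : Prop :=
  (forall d, B d -> subset x d) /\
  (forall d d', B d -> B d' -> d <> d' -> meet_below x d d').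

Definition above_all (TT : set (set (expn n L))) (x : expn n L) : Prop :=
  forall T, TT T -> exists y, T y /\ subset x y.

Definition maximal_above (TT : set (set (expn n L))) (x : expn n L) : Prop :=
  above_all TT x /\
  forall a, ~ proj1_sig x a -> exists T, TT T /\ forall y, T y -> subset x y -> ~ proj1_sig y a.

Lemma expn_ext (x y : expn n L) : (forall z, proj1_sig x z <-> proj1_sig y z) -> x = y.
Proof.
  destruct x as [A HA], y as [A' HA']; simpl. intros H.
  assert (A = A') as <- by (apply set_ext, H). f_equal. apply proof_irrelevance.
Qed.

Lemma subset_antisym {x y : expn n L} : subset x y -> subset y x -> x = y.
Proof. intros H1 H2. apply expn_ext. intros z; split; auto. Qed.

Definition expn_empty : expn n L :=
  exist _ (fun _ => False) (ex_intro _ [] (conj (le_0_n n) (fun _ (f : False) => f))).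

Lemma expn_list_support (Ls : list (expn n L)) :
  exists la, forall d, In d Ls -> forall z, proj1_sig d z -> In z la.
Proof.
  induction Ls as [|d Ls [la Hla]]; [exists []; intros d []|].
  destruct (proj2_sig d) as [ld [_ Hld]]. exists (ld ++ la).
  intros d' [<-|Hd'] z Hz; apply in_or_app; [left; apply Hld, Hz|right; apply (Hla d' Hd' z Hz)].
Qed.

(* A strictly ascending chain in [exp_n L] has at most [n + 1] elements:
   [l] collects distinct elements of the current [x], and [|x| <= n]. *)
Lemma expn_ascent_stops (P Q : set (expn n L)) :
  (forall x, P x -> ~ Q x -> exists y, P y /\ subset x y /\ y <> x) ->
  forall x, P x -> exists y, P y /\ Q y.
Proof.
  intros Hstep.
  assert (K : forall d x (l : list L), P x -> NoDup l -> (forall z, In z l -> proj1_sig x z) ->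
            length l + d = S n -> exists y, P y /\ Q y).
  { induction d as [|d IH]; intros x l Hx Hnd Hl Hlen.
    - exfalso. destruct (proj2_sig x) as [lx [Hlx Hcov]].
      pose proof (NoDup_incl_length Hnd (fun z Hz => Hcov z (Hl z Hz))). lia.
    - destruct (classic (Q x)) as [HQ|HQ]; [exists x; auto|].
      destruct (Hstep x Hx HQ) as [y [Hy [Hxy Hne]]].
      assert (Ha : exists a, proj1_sig y a /\ ~ proj1_sig x a).
      { apply NNPP. intros Hno. apply Hne, subset_antisym; auto.
        intros z Hz. apply NNPP. intros Hxz. apply Hno. exists z. auto. }
      destruct Ha as [a [Hya Hxa]].
      apply (IH y (a :: l)); [exact Hy| |intros z [<-|Hz]; auto|simpl; lia].
      constructor; [intros Hin; apply Hxa, Hl, Hin|exact Hnd]. }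
  intros x Hx. apply (K (S n) x []); [exact Hx|constructor|intros z []|simpl; lia].
Qed.

Lemma exists_maximal_above (TT : set (set (expn n L))) :
  (exists T, TT T) -> (forall T, TT T -> exists y, T y) -> exists x, maximal_above TT x.
Proof.
  intros [T0 HT0] Hne.
  assert (Hempty : above_all TT expn_empty).
  { intros T HT. destruct (Hne T HT) as [y Hy]. exists y. split; [exact Hy|intros z []]. }
  destruct (expn_ascent_stops (above_all TT) (maximal_above TT)) with expn_empty
    as [x [_ Hx]]; [|exact Hempty|exists x; exact Hx].
  intros x Hx Hnmax.
  assert (Ha : exists a, ~ proj1_sig x a /\
             forall T, TT T -> exists y, T y /\ subset x y /\ proj1_sig y a).
  { apply NNPP. intros Hno. apply Hnmax. split; [exact Hx|]. intros a Hxa.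
    apply NNPP. intros Hnot. apply Hno. exists a. split; [exact Hxa|]. intros T HT.
    apply NNPP. intros Hnone. apply Hnot. exists T. split; [exact HT|].
    intros y Hy Hxy Hya. apply Hnone. exists y. auto. }
  destruct Ha as [a [Hxa Hall]].
  destruct (Hall T0 HT0) as [y0 [_ [Hxy0 Hy0a]]].
  assert (Hxa_exp : exp_set n (fun z => proj1_sig x z \/ z = a)).
  { apply (exp_set_mono (proj2_sig y0)). intros z [Hz|Eza]; [apply Hxy0, Hz|rewrite Eza; exact Hy0a]. }
  set (xa := exist _ _ Hxa_exp : expn n L).
  exists xa. split; [|split].
  - intros T HT. destruct (Hall T HT) as [y [Hy [Hxy Hya]]]. exists y. split; [exact Hy|].
    intros z [Hz|Eza]; [apply Hxy, Hz|rewrite Eza; exact Hya].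
  - intros z Hz. left. exact Hz.
  - intros E. apply Hxa. rewrite <- E. right. reflexivity.
Qed.

Section ShiftContinuous.
Context (tau : topology (expn n L)).
Hypotheses (hn : 0 < n) (hT1 : T1 tau) (hsc : shift_continuous tau).

Definition expn_singleton (a : L) : expn n L :=
  exist _ (fun z => z = a) (ex_intro _ [a] (conj hn (fun z (Hz : z = a) => or_introl (eq_sym Hz)))).

(* [{a} ∩ y] is [{a}] or [∅] according as [a ∈ y]; pull back a neighbourhood
   of [{a}] missing [∅]. *)
Lemma up_singleton_open (a : L) : is_open tau (fun y => proj1_sig y a).
Proof.
  assert (Hne : expn_singleton a <> expn_empty).
  { intros E. assert (H : proj1_sig (expn_singleton a) a) by reflexivity. rewrite E in H. exact H. }
  destruct (hT1 _ _ Hne) as [U [HU [HUa HU0]]].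
  apply open_ext with (fun y => U (exp_meet (expn_singleton a) y)); [apply hsc, HU|].
  intros y; split.
  - intros HUy. apply NNPP. intros Hya. apply HU0.
    replace expn_empty with (exp_meet (expn_singleton a) y); [exact HUy|].
    apply expn_ext. simpl. intros z; split; [intros [-> Hy]; contradiction|intros []].
  - intros Hya. replace (exp_meet (expn_singleton a) y) with (expn_singleton a); [exact HUa|].
    apply expn_ext. simpl. intros z; split; [intros ->; auto|tauto].
Qed.

Lemma up_open (x : expn n L) : is_open tau (up x).
Proof.
  destruct (proj2_sig x) as [lx [_ Hlx]].
  assert (H : forall l, is_open tau (fun y => forall z, In z l -> proj1_sig x z -> proj1_sig y z)).
  { induction l as [|a l IH].
    - apply open_ext with (fun _ => True); [apply open_full|].
      intros y; split; [intros _ z []|auto].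
    - apply open_ext with (fun y => (proj1_sig x a -> proj1_sig y a) /\
                                    (forall z, In z l -> proj1_sig x z -> proj1_sig y z)).
      + apply open_inter; [|exact IH].
        destruct (classic (proj1_sig x a)) as [Ha|Ha].
        * apply open_ext with (1 := up_singleton_open a). tauto.
        * apply open_ext with (1 := open_full tau). tauto.
      + intros y; split.
        * intros [H1 H2] z [<-|Hz]; auto.
        * intros Hy. split; intros; apply Hy; simpl; auto. }
  apply open_ext with (1 := H lx). intros y; split.
  - intros Hy z Hz. apply Hy; auto.
  - intros Hy z _ Hz. apply Hy, Hz.
Qed.

(* [x ∩ y = x] exactly when [x ⊆ y]. *)
Lemma up_complement_open (x : expn n L) : is_open tau (fun y => ~ up x y).
Proof.
  apply open_ext with (fun y => exp_meet x y <> x); [apply (hsc x (fun w => w <> x)), T1_open_neq, hT1|].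
  intros y; split.
  - intros Hne Hup. apply Hne, expn_ext. simpl. intros z; split; [tauto|auto].
  - intros Hn E. apply Hn. intros z Hz.
    assert (H : proj1_sig (exp_meet x y) z) by (rewrite E; exact Hz). apply H.
Qed.

Lemma expn_Hausdorff : Hausdorff tau.
Proof.
  assert (Hsep : forall x y, ~ subset x y ->
            exists U V, is_open tau U /\ is_open tau V /\ U x /\ V y /\ forall z, ~ (U z /\ V z)).
  { intros x y Hxy. exists (up x), (fun w => ~ up x w).
    refine (conj (up_open x) (conj (up_complement_open x) (conj (fun z Hz => Hz) (conj Hxy _)))).
    intros z [H1 H2]. contradiction. }
  intros x y Hxy. destruct (classic (subset x y)) as [Hs|Hs]; [|apply Hsep, Hs].
  assert (Hn : ~ subset y x) by (intro; apply Hxy, subset_antisym; auto).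
  destruct (Hsep y x Hn) as [U [V [HU [HV [HUy [HVx Hd]]]]]].
  exists V, U. refine (conj HV (conj HU (conj HVx (conj HUy _)))).
  intros z [H1 H2]. apply (Hd z). auto.
Qed.

Lemma expn_isolated_dense : dense tau (isolated tau).
Proof.
  intros U HU [x Hx].
  apply (expn_ascent_stops U (isolated tau)) with x; [|exact Hx].
  intros y Hy Hni. apply NNPP. intros Hno. apply Hni.
  apply open_ext with (fun w => U w /\ up y w); [apply open_inter; [exact HU|apply up_open]|].
  intros w; split.
  - intros [HUw Hyw]. apply NNPP. intros Hne. apply Hno. exists w. auto.
  - intros ->. split; [exact Hy|intros z Hz; exact Hz].
Qed.

Lemma delta_system_accumulation (B : set (expn n L)) (x : expn n L) :
  countably_compact_at tau (isolated tau) -> (forall d, B d -> isolated tau d) ->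
  ~ finite_set B -> delta_system B x -> accumulation_point tau x B.
Proof.
  intros HC HBi Hinf [Habove Hmeet].
  destruct (HC B HBi Hinf) as [p Hp].
  destruct (accumulation_point_nbhd_two tau hT1 p B (up p) Hp (up_open p) (fun z Hz => Hz))
    as [d1 [d2 [HB1 [HB2 [Hpd1 [Hpd2 Hne]]]]]].
  assert (Hpx : subset p x) by (intros z Hz; apply (Hmeet d1 d2); auto).
  destruct (classic (subset x p)) as [Hxp|Hxp].
  - rewrite <- (subset_antisym Hpx Hxp). exact Hp.
  - destruct (Hp _ (up_complement_open x) Hxp) as [d [Hd [HBd _]]].
    contradiction (Hd (Habove d HBd)).
Qed.

Lemma maximal_above_avoid (TT : set (set (expn n L))) (x : expn n L) (T : set (expn n L))
  (la : list L) :
  open_filter_base tau TT -> maximal_above TT x -> TT T ->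
  exists T', TT T' /\ (forall z, T' z -> T z) /\
    forall a, In a la -> ~ proj1_sig x a -> forall y, T' y -> subset x y -> ~ proj1_sig y a.
Proof.
  intros [_ [_ Hdir]] [_ Hmax] HT.
  induction la as [|a la [T' [HT' [HT'T HT'la]]]].
  { exists T. split; [exact HT|]. split; [auto|intros a []]. }
  destruct (classic (proj1_sig x a)) as [Ha|Ha].
  - exists T'. split; [exact HT'|]. split; [exact HT'T|].
    intros b [<-|Hb]; [contradiction|apply HT'la, Hb].
  - destruct (Hmax a Ha) as [Ta [HTa HTa']].
    destruct (Hdir T' Ta HT' HTa) as [T'' [HT'' HT''sub]].
    exists T''. split; [exact HT''|]. split; [intros z Hz; apply HT'T, (HT''sub z Hz)|].
    intros b [<-|Hb] Hxb y Hy Hxy.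
    + apply (HTa' y); auto. apply (HT''sub y Hy).
    + apply (HT'la b Hb Hxb y); auto. apply (HT''sub y Hy).
Qed.

(* Shrinking [T] so that points above [x] avoid the finitely many elements
   of [Ls] outside [x] forces the new point to meet each [d'] inside [x]. *)
Lemma delta_system_step (TT : set (set (expn n L))) (x : expn n L) (T : set (expn n L))
  (Ls : list (expn n L)) :
  open_filter_base tau TT -> maximal_above TT x -> TT T -> ~ T x ->
  exists d, (isolated tau d /\ T d /\ subset x d) /\
    forall d', In d' Ls -> d <> d' /\ meet_below x d d'.
Proof.
  intros Hbase Hmax HT HTx.
  destruct (expn_list_support Ls) as [la Hla].
  destruct (maximal_above_avoid TT x T la Hbase Hmax HT) as [T' [HT' [HT'T HT'la]]].
  destruct (proj1 Hmax T' HT') as [y [HyT' Hxy]].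
  destruct (expn_isolated_dense (fun w => T' w /\ subset x w)
              (open_inter _ _ _ (proj1 (proj1 (proj2 Hbase) T' HT')) (up_open x))
              (ex_intro _ y (conj HyT' Hxy)))
    as [d [[HdT' Hxd] Hdi]].
  assert (Hmeet : forall d', In d' Ls -> meet_below x d d').
  { intros d' Hd' z Hdz Hd'z. apply NNPP. intros Hxz.
    apply (HT'la z (Hla d' Hd' z Hd'z) Hxz d HdT' Hxd Hdz). }
  exists d. split; [split; [exact Hdi|split; [apply HT'T, HdT'|exact Hxd]]|].
  intros d' Hd'. split; [|apply Hmeet, Hd'].
  intros <-. apply HTx.
  replace x with d; [apply HT'T, HdT'|].
  apply subset_antisym; [intros z Hz; apply (Hmeet d Hd' z Hz Hz)|exact Hxd].
Qed.

Lemma adherent_of_compact_at_isolated (TT : set (set (expn n L))) :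
  countably_compact_at tau (isolated tau) -> open_filter_base tau TT ->
  exists p, adherent_point tau p TT.
Proof.
  intros HC Hbase.
  destruct (exists_maximal_above TT (proj1 Hbase) (fun T HT => proj2 (proj1 (proj2 Hbase) T HT)))
    as [x Hmax].
  exists x. intros O HO HOx T HT. apply NNPP. intros HOT.
  assert (HTx : ~ T x) by (intros HTx; apply HOT; exists x; auto).
  destruct (exists_infinite_pairwise (fun d => isolated tau d /\ T d /\ subset x d) (meet_below x))
    as [B [Hinf [HBQ HBR]]].
  - intros d d' H z Hd' Hd. apply H; auto.
  - intros Ls. apply (delta_system_step TT x T Ls Hbase Hmax HT HTx).
  - assert (Hacc : accumulation_point tau x B).
    { apply delta_system_accumulation; auto; [intros d Hd; apply HBQ, Hd|].
      split; [intros d Hd; apply HBQ, Hd|exact HBR]. }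
    destruct (Hacc O HO HOx) as [d [HOd [HBd _]]].
    apply HOT. exists d. split; [exact HOd|apply HBQ, HBd].
Qed.

End ShiftContinuous.
End ExpSemilattice.

Theorem theorem10 (n : nat) (L : Type) (hn : 0 < n) (hL : infinite_type L)
  (tau : topology (expn n L)) (hT1 : T1 tau) (hsc : shift_continuous tau) :
  (countably_pracompact tau <-> feebly_compact tau) /\
  (feebly_compact tau <-> d_feebly_compact tau) /\
  (d_feebly_compact tau <-> H_closed tau).
Proof.
  pose proof (expn_isolated_dense tau hn hT1 hsc) as Hdense.
  assert (HCH : countably_compact_at tau (isolated tau) -> H_closed tau).
  { intros HC. apply H_closed_of_adherent; [exact (expn_Hausdorff tau hn hT1 hsc)|].
    intros TT. exact (adherent_of_compact_at_isolated tau hn hT1 hsc TT HC). }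
  pose proof (countably_pracompact_iff tau Hdense) as HCP.
  pose proof (compact_at_isolated_feebly_compact tau hT1 Hdense) as HCF.
  pose proof (compact_at_isolated_d_feebly_compact tau hT1 Hdense) as HCD.
  pose proof (feebly_compact_compact_at_isolated tau) as HFC.
  pose proof (d_feebly_compact_compact_at_isolated tau) as HDC.
  pose proof (H_closed_compact_at_isolated tau) as HHC.
  tauto.
Qed.
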